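(* Let $A\in\mathbb{C}^{n\times n}$, $B\in\mathbb{C}^{n\times m}$, $C\in\mathbb{C}^{p\times n}$, and suppose $A^*Z_j=C^*h_j+Z_jH_{-j}$ with $Z_j\in\mathbb{C}^{n\times N}$, $h_j\in\mathbb{C}^{p\times N}$, $H_{-j}\in\mathbb{C}^{N\times N}$ such that $0=H_{-j}+H_{-j}^*-(Z_j^*BB^*Z_j+h_j^*h_j)$; put $R_j=C^*+Z_jh_j^*$. Let $\tilde Z\in\mathbb{C}^{n\times k}$, $U_1\in\mathbb{C}^{p\times k}$, $D\in\mathbb{C}^{k\times k}$, $U_2=h_j^*U_1$ satisfy $A^*\tilde Z=C^*U_1+Z_jU_2+\tilde ZD$ (e.g. $\tilde Z=(A^*-\mu I_n)^{-1}R_j$, $U_1=I_p$, $D=\mu I_p$). Let $Y_{12}\in\mathbb{C}^{N\times k}$ solve $Y_{12}D+H_{-j}^*Y_{12}-Z_j^*BB^*\tilde Z=0$, let $Y_{22}\in\mathbb{C}^{k\times k}$ be Hermitian and solve $$0=Y_{12}^*U_2+Y_{22}D+U_2^*Y_{12}+D^*Y_{22}-\tilde Z^*BB^*\tilde Z-U_1^*U_1,$$ and assume $Y_{22}-Y_{12}^*Y_{12}$ is positive definite with Cholesky factorization $G_{22}^*G_{22}$. Define $\hat U_1=(-h_jY_{12}+U_1)G_{22}^{-1}$, $\hat U_2=(-H_{-j}Y_{12}+U_2+Y_{12}D)G_{22}^{-1}$, $\hat D=G_{22}DG_{22}^{-1}$, $\hat Z=(-Z_jY_{12}+\tilde Z)G_{22}^{-1}$,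 $Z_{j+1}=\begin{bmatrix}Z_j&\hat Z\end{bmatrix}$, $h_{j+1}=\begin{bmatrix}h_j&\hat U_1\end{bmatrix}$, $H_{-(j+1)}=\begin{bmatrix}H_{-j}&\hat U_2\\0&\hat D\end{bmatrix}$. Then $A^*Z_{j+1}=C^*h_{j+1}+Z_{j+1}H_{-(j+1)}$, $0=H_{-(j+1)}+H_{-(j+1)}^*-(Z_{j+1}^*BB^*Z_{j+1}+h_{j+1}^*h_{j+1})$, and $R_{j+1}:=C^*+Z_{j+1}h_{j+1}^*=R_j+\hat Z\hat U_1^*$ satisfies $\mathcal{R}(Z_{j+1}Z_{j+1}^* )=R_{j+1}R_{j+1}^*$.
   Context: $\mathcal{R}(X)=A^*X+XA+C^*C-XBB^*X$ is the Riccati residual. The hypothesis on $(Z_j,h_j,H_{-j})$ states that the identity matrix solves the small Lyapunov equation $0=\tilde YH_{-j}+H_{-j}^*\tilde Y-(Z_j^*BB^*Z_j+h_j^*h_j)$. *)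

From HB Require Import structures.
From mathcomp Require Import all_boot all_order all_algebra.
From mathcomp Require Import complex.
Set Implicit Arguments. Unset Strict Implicit. Unset Printing Implicit Defensive.
Import Order.TTheory GRing.Theory Num.Theory.
Local Open Scope ring_scope.

Definition ctmx (C : numClosedFieldType) m n (A : 'M[C]_(m, n)) : 'M[C]_(n, m) :=
  (map_mx Num.conj A)^T.

Definition is_hermitian_mx (C : numClosedFieldType) n (M : 'M[C]_n) : Prop :=
  ctmx M = M.

Definition posdefmx (C : numClosedFieldType) n (M : 'M[C]_n) : Prop :=
  is_hermitian_mx M /\
  forall x : 'cV[C]_n, x != 0 -> 0 < (ctmx x *m M *m x) ord0 ord0.

Definition cholesky_factor (C : numClosedFieldType) n (M G : 'M[C]_n) : Prop :=
  [/\ forall i j : 'I_n, (j < i)%N -> G i j = 0,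
      forall i : 'I_n, 0 < G i i
    & ctmx G *m G = M].

Definition riccati_res (K : numClosedFieldType) n m p
  (A : 'M[K]_n) (B : 'M[K]_(n, m)) (C : 'M[K]_(p, n)) (X : 'M[K]_n) : 'M[K]_n :=
  ctmx A *m X + X *m A + ctmx C *m C - X *m B *m ctmx B *m X.

From HB Require Import structures.
From mathcomp Require Import all_boot all_order all_algebra.
From mathcomp Require Import complex ring.
Set Implicit Arguments. Unset Strict Implicit. Unset Printing Implicit Defensive.
Import Order.TTheory GRing.Theory Num.Theory.
Local Open Scope ring_scope.

Section Adjoint.
Variable K : numClosedFieldType.

Lemma ctmxM m n p (X : 'M[K]_(m, n)) (Y : 'M[K]_(n, p)) :
  ctmx (X *m Y) = ctmx Y *m ctmx X.
Proof. by rewrite /ctmx map_mxM trmx_mul. Qed.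

Lemma ctmxD m n (X Y : 'M[K]_(m, n)) : ctmx (X + Y) = ctmx X + ctmx Y.
Proof. by apply/matrixP=> i j; rewrite !mxE rmorphD. Qed.

Lemma ctmxN m n (X : 'M[K]_(m, n)) : ctmx (- X) = - ctmx X.
Proof. by apply/matrixP=> i j; rewrite !mxE rmorphN. Qed.

Lemma ctmx0 m n : ctmx (0 : 'M[K]_(m, n)) = 0.
Proof. by apply/matrixP=> i j; rewrite !mxE rmorph0. Qed.

Lemma ctmx1 n : ctmx (1%:M : 'M[K]_n) = 1%:M.
Proof. by apply/matrixP=> i j; rewrite !mxE conjC_nat eq_sym. Qed.

Lemma ctmxK m n (X : 'M[K]_(m, n)) : ctmx (ctmx X) = X.
Proof. by apply/matrixP=> i j; rewrite !mxE conjCK. Qed.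

Lemma ctmx_row m n1 n2 (X : 'M[K]_(m, n1)) (Y : 'M[K]_(m, n2)) :
  ctmx (row_mx X Y) = col_mx (ctmx X) (ctmx Y).
Proof. by rewrite /ctmx map_row_mx tr_row_mx. Qed.

Lemma ctmx_block m1 m2 n1 n2 (X11 : 'M[K]_(m1, n1)) (X12 : 'M[K]_(m1, n2))
    (X21 : 'M[K]_(m2, n1)) (X22 : 'M[K]_(m2, n2)) :
  ctmx (block_mx X11 X12 X21 X22)
  = block_mx (ctmx X11) (ctmx X21) (ctmx X12) (ctmx X22).
Proof. by rewrite /ctmx map_block_mx tr_block_mx. Qed.

(* A Cholesky factor has a positive diagonal and is triangular, hence it is
   invertible. *)
Lemma cholesky_factor_unit n (M G : 'M[K]_n) :
  cholesky_factor M G -> G \in unitmx.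
Proof.
case=> Glow Gdiag _; rewrite unitmxE unitfE -det_tr det_trig.
  by apply: lt0r_neq0; apply: prodr_gt0 => i _; rewrite mxE Gdiag.
by apply/is_trig_mxP => i j lt_ij; rewrite mxE Glow.
Qed.

End Adjoint.

(* Entrywise commutative-ring normalization, for goals whose two sides are
   the same signed sum of matrix products once products are distributed; the
   entries of the products act as atoms. *)
Ltac mx_ring := apply/matrixP=> ? ?; rewrite !mxE; ring.

Ltac mx_expand := rewrite ?(mulmxDl, mulmxDr, mulmxN, mulNmx, mulmxBl, mulmxBr,
  ctmxD, ctmxN, ctmxM, ctmxK, ctmx0, opprD, opprK) ?mulmxA.

Definition sylvester_eq (K : numClosedFieldType) n p N (A : 'M[K]_n)
    (C : 'M[K]_(p, n)) (Z : 'M[K]_(n, N)) (h : 'M[K]_(p, N)) (H : 'M[K]_N) :=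
  ctmx A *m Z = ctmx C *m h + Z *m H.

(* The small Lyapunov equation 0 = H + H^* - (Z^* B B^* Z + h^* h), i.e. the
   identity matrix solves the projected Lyapunov equation. *)
Definition lyapunov_eq (K : numClosedFieldType) n m p N (B : 'M[K]_(n, m))
    (Z : 'M[K]_(n, N)) (h : 'M[K]_(p, N)) (H : 'M[K]_N) :=
  0 = H + ctmx H - (ctmx Z *m B *m ctmx B *m Z + ctmx h *m h).

Section Admissible.
Context {K : numClosedFieldType} {n m p : nat}.
Context {A : 'M[K]_n} {B : 'M[K]_(n, m)} {C : 'M[K]_(p, n)}.

(* For an admissible triple the Riccati residual of Z Z^* is R R^* with
   R = C^* + Z h^*: the Sylvester equation eliminates A, the Lyapunov
   equation eliminates the quadratic B-term. *)
Lemma riccati_res_factor N (Z : 'M[K]_(n, N)) (h : 'M[K]_(p, N)) (H : 'M[K]_N) :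
  sylvester_eq A C Z h H -> lyapunov_eq B Z h H ->
  riccati_res A B C (Z *m ctmx Z)
  = (ctmx C + Z *m ctmx h) *m ctmx (ctmx C + Z *m ctmx h).
Proof.
rewrite /sylvester_eq /lyapunov_eq => syl lyap.
have quadZ q (X : 'M[K]_(q, N)) :
    X *m ctmx Z *m B *m ctmx B *m Z = X *m (H + ctmx H - ctmx h *m h).
  move/eqP: lyap; rewrite eq_sym subr_eq0 => /eqP ->.
  by rewrite addrK !mulmxA.
have sylZ q (X : 'M[K]_(q, N)) :
    X *m ctmx Z *m A = X *m (ctmx h *m C + ctmx H *m ctmx Z).
  by rewrite -mulmxA -[A]ctmxK -ctmxM syl ctmxD !ctmxM !ctmxK.
rewrite /riccati_res sylZ !mulmxA syl quadZ ctmxD ctmxM !ctmxK.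
mx_expand; mx_ring.
Qed.

Lemma row_mx_sylvester N k (Z : 'M[K]_(n, N)) (h : 'M[K]_(p, N)) (H : 'M[K]_N)
    (Z' : 'M[K]_(n, k)) (h' : 'M[K]_(p, k)) (H12 : 'M[K]_(N, k)) (H22 : 'M[K]_k) :
  sylvester_eq A C Z h H ->
  ctmx A *m Z' = ctmx C *m h' + Z *m H12 + Z' *m H22 ->
  sylvester_eq A C (row_mx Z Z') (row_mx h h') (block_mx H H12 0 H22).
Proof.
rewrite /sylvester_eq => syl syl'.
by rewrite mul_row_block !mul_mx_row add_row_mx mulmx0 addr0 syl syl' addrA.
Qed.

Lemma block_mx_lyapunov N k (Z : 'M[K]_(n, N)) (h : 'M[K]_(p, N)) (H : 'M[K]_N)
    (Z' : 'M[K]_(n, k)) (h' : 'M[K]_(p, k)) (H12 : 'M[K]_(N, k)) (H22 : 'M[K]_k) :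
  lyapunov_eq B Z h H ->
  H12 = ctmx Z *m B *m ctmx B *m Z' + ctmx h *m h' ->
  lyapunov_eq B Z' h' H22 ->
  lyapunov_eq B (row_mx Z Z') (row_mx h h') (block_mx H H12 0 H22).
Proof.
rewrite /lyapunov_eq => lyap coupling lyap'.
rewrite ctmx_block !ctmx_row mul_col_row 2!mul_col_mx mul_col_row.
rewrite !add_block_mx opp_block_mx add_block_mx -(block_mx0 _ N k N k).
congr block_mx => //.
- by rewrite coupling ctmx0 addr0 subrr.
- by rewrite coupling ctmxD !ctmxM !ctmxK add0r !mulmxA subrr.
Qed.

End Admissible.

Section NewBlock.
Context {K : numClosedFieldType} {n m p N k : nat}.
Context {A : 'M[K]_n} {B : 'M[K]_(n, m)} {C : 'M[K]_(p, n)}.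
Context {Zj : 'M[K]_(n, N)} {hj : 'M[K]_(p, N)} {Hj : 'M[K]_N}.
Context {Zt : 'M[K]_(n, k)} {U1 : 'M[K]_(p, k)} {U2 : 'M[K]_(N, k)}.
Context {D : 'M[K]_k} {Y12 : 'M[K]_(N, k)} {Y22 : 'M[K]_k}.

Hypothesis syl_j : sylvester_eq A C Zj hj Hj.
Hypothesis lyap_j : lyapunov_eq B Zj hj Hj.
Hypothesis U2_def : U2 = ctmx hj *m U1.
Hypothesis syl_t : ctmx A *m Zt = ctmx C *m U1 + Zj *m U2 + Zt *m D.
Hypothesis Y12_eq : Y12 *m D + ctmx Hj *m Y12 - ctmx Zj *m B *m ctmx B *m Zt = 0.
Hypothesis Y22_eq : 0 = ctmx Y12 *m U2 + Y22 *m D + ctmx U2 *m Y12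
  + ctmx D *m Y22 - ctmx Zt *m B *m ctmx B *m Zt - ctmx U1 *m U1.

(* The new block before normalization by the Cholesky factor. *)
Local Notation Zc := (- (Zj *m Y12) + Zt).
Local Notation U1c := (- (hj *m Y12) + U1).
Local Notation U2c := (- (Hj *m Y12) + U2 + Y12 *m D).

(* The hypotheses as rewrite rules, in bare form and behind an arbitrary
   left factor, as they occur after distributing the products. *)
Let quad_j0 : ctmx Zj *m B *m ctmx B *m Zj = Hj + ctmx Hj - ctmx hj *m hj.
Proof.
by move/eqP: lyap_j; rewrite /lyapunov_eq eq_sym subr_eq0 => /eqP ->; rewrite addrK.
Qed.

Let quad_j q (X : 'M[K]_(q, N)) :
  X *m ctmx Zj *m B *m ctmx B *m Zj = X *m (Hj + ctmx Hj - ctmx hj *m hj).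
Proof. by rewrite -quad_j0 !mulmxA. Qed.

Let cross_jt0 : ctmx Zj *m B *m ctmx B *m Zt = Y12 *m D + ctmx Hj *m Y12.
Proof. by apply/esym/eqP; rewrite -subr_eq0 Y12_eq. Qed.

Let cross_jt q (X : 'M[K]_(q, N)) :
  X *m ctmx Zj *m B *m ctmx B *m Zt = X *m (Y12 *m D + ctmx Hj *m Y12).
Proof. by rewrite -cross_jt0 !mulmxA. Qed.

Let cross_tj0 :
  ctmx Zt *m B *m ctmx B *m Zj = ctmx D *m ctmx Y12 + ctmx Y12 *m Hj.
Proof.
have -> : ctmx D *m ctmx Y12 + ctmx Y12 *m Hj
          = ctmx (ctmx Zj *m B *m ctmx B *m Zt).
  by rewrite cross_jt0 ctmxD !ctmxM ctmxK.
by rewrite !ctmxM !ctmxK !mulmxA.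
Qed.

Let cross_tj q (X : 'M[K]_(q, k)) :
  X *m ctmx Zt *m B *m ctmx B *m Zj = X *m (ctmx D *m ctmx Y12 + ctmx Y12 *m Hj).
Proof. by rewrite -cross_tj0 !mulmxA. Qed.

Let U2_defX q (X : 'M[K]_(q, N)) : X *m ctmx hj *m U1 = X *m U2.
Proof. by rewrite U2_def mulmxA. Qed.

Let U2_adj : ctmx U1 *m hj = ctmx U2.
Proof. by rewrite U2_def ctmxM ctmxK. Qed.

Let U2_adjX q (X : 'M[K]_(q, k)) : X *m ctmx U1 *m hj = X *m ctmx U2.
Proof. by rewrite -U2_adj mulmxA. Qed.

Local Notation rewrite_hyps := (quad_j0, quad_j, cross_jt0, cross_jt,
  cross_tj0, cross_tj, U2_defX, U2_adj, U2_adjX).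

Lemma new_block_sylvester :
  ctmx A *m Zc = ctmx C *m U1c + Zj *m U2c + Zc *m D.
Proof. mx_expand; rewrite syl_j syl_t; mx_expand; mx_ring. Qed.

(* Coupling with the old block: the equation for Y12 makes the off-diagonal
   block of the Lyapunov equation vanish. *)
Lemma new_block_coupling :
  U2c = ctmx Zj *m B *m ctmx B *m Zc + ctmx hj *m U1c.
Proof. rewrite U2_def; mx_expand; rewrite ?rewrite_hyps; mx_expand; mx_ring. Qed.

Lemma new_block_lyapunov :
  (Y22 - ctmx Y12 *m Y12) *m D + ctmx D *m (Y22 - ctmx Y12 *m Y12)
  = ctmx Zc *m B *m ctmx B *m Zc + ctmx U1c *m U1c.
Proof.
have quad_t : ctmx Zt *m B *m ctmx B *m Zt = ctmx Y12 *m U2 + Y22 *m D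
    + ctmx U2 *m Y12 + ctmx D *m Y22 - ctmx U1 *m U1.
  by apply/eqP; rewrite eq_sym -subr_eq0 [X in _ == X]Y22_eq; apply/eqP; mx_ring.
mx_expand; rewrite ?rewrite_hyps quad_t; mx_expand; rewrite ?rewrite_hyps.
mx_expand; mx_ring.
Qed.

End NewBlock.

Section Normalization.
Context {K : numClosedFieldType} {n m p N k : nat}.
Context {A : 'M[K]_n} {B : 'M[K]_(n, m)} {C : 'M[K]_(p, n)}.
Context {Z : 'M[K]_(n, N)} {Z' : 'M[K]_(n, k)} {h' : 'M[K]_(p, k)}.
Context {H12 : 'M[K]_(N, k)} {D G : 'M[K]_k}.
Hypothesis G_unit : G \in unitmx.

Let mulVG q (X : 'M[K]_(q, k)) : X *m invmx G *m G = X.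
Proof. by rewrite -mulmxA mulVmx ?mulmx1. Qed.

Let mulGV q (X : 'M[K]_(q, k)) : X *m G *m invmx G = X.
Proof. by rewrite -mulmxA mulmxV ?mulmx1. Qed.

Lemma normalize_sylvester :
  ctmx A *m Z' = ctmx C *m h' + Z *m H12 + Z' *m D ->
  ctmx A *m (Z' *m invmx G) = ctmx C *m (h' *m invmx G)
    + Z *m (H12 *m invmx G) + Z' *m invmx G *m (G *m D *m invmx G).
Proof. by move=> syl; rewrite !mulmxA mulVG -!mulmxDl syl. Qed.

Lemma normalize_coupling (h : 'M[K]_(p, N)) :
  H12 = ctmx Z *m B *m ctmx B *m Z' + ctmx h *m h' ->
  H12 *m invmx G
  = ctmx Z *m B *m ctmx B *m (Z' *m invmx G) + ctmx h *m (h' *m invmx G).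
Proof. by move=> ->; rewrite mulmxDl !mulmxA. Qed.

(* If W = G^* G solves W D + D^* W = Z'^* B B^* Z' + h'^* h', then the
   congruence by G^-1 shows that the identity solves the Lyapunov equation of
   the normalized block with diagonal block G D G^-1. *)
Lemma normalize_lyapunov (W : 'M[K]_k) :
  W = ctmx G *m G ->
  W *m D + ctmx D *m W = ctmx Z' *m B *m ctmx B *m Z' + ctmx h' *m h' ->
  lyapunov_eq B (Z' *m invmx G) (h' *m invmx G) (G *m D *m invmx G).
Proof.
move=> W_def lyap; rewrite /lyapunov_eq.
have adjVG : ctmx (invmx G) *m ctmx G = 1%:M.
  by rewrite -ctmxM mulmxV // ctmx1.
have sym_part : G *m D *m invmx G + ctmx (G *m D *m invmx G)
    = ctmx (invmx G) *m (W *m D + ctmx D *m W) *m invmx G.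
  by rewrite W_def !ctmxM mulmxDr mulmxDl !mulmxA adjVG mul1mx mulGV.
by rewrite sym_part lyap !ctmxM mulmxDr mulmxDl !mulmxA subrr.
Qed.

End Normalization.

Theorem mainTheorem10 (R : rcfType) (n m p N k : nat)
  (A : 'M[R[i]]_n) (B : 'M[R[i]]_(n, m)) (C : 'M[R[i]]_(p, n))
  (Zj : 'M[R[i]]_(n, N)) (hj : 'M[R[i]]_(p, N)) (Hj : 'M[R[i]]_N)
  (Zt : 'M[R[i]]_(n, k)) (U1 : 'M[R[i]]_(p, k)) (U2 : 'M[R[i]]_(N, k))
  (D : 'M[R[i]]_k) (Y12 : 'M[R[i]]_(N, k)) (Y22 : 'M[R[i]]_k)
  (G22 : 'M[R[i]]_k) :
  ctmx A *m Zj = ctmx C *m hj + Zj *m Hj ->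
  0 = Hj + ctmx Hj - (ctmx Zj *m B *m ctmx B *m Zj + ctmx hj *m hj) ->
  U2 = ctmx hj *m U1 ->
  ctmx A *m Zt = ctmx C *m U1 + Zj *m U2 + Zt *m D ->
  Y12 *m D + ctmx Hj *m Y12 - ctmx Zj *m B *m ctmx B *m Zt = 0 ->
  is_hermitian_mx Y22 ->
  0 = ctmx Y12 *m U2 + Y22 *m D + ctmx U2 *m Y12 + ctmx D *m Y22
      - ctmx Zt *m B *m ctmx B *m Zt - ctmx U1 *m U1 ->
  posdefmx (Y22 - ctmx Y12 *m Y12) ->
  cholesky_factor (Y22 - ctmx Y12 *m Y12) G22 ->
  let Rj := ctmx C + Zj *m ctmx hj in
  let G22i := invmx G22 in
  let hU1 := (- (hj *m Y12) + U1) *m G22i in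
  let hU2 := (- (Hj *m Y12) + U2 + Y12 *m D) *m G22i in
  let hD := G22 *m D *m G22i in
  let hZ := (- (Zj *m Y12) + Zt) *m G22i in
  let Zj1 := row_mx Zj hZ in
  let hj1 := row_mx hj hU1 in
  let Hj1 := block_mx Hj hU2 0 hD in
  let Rj1 := ctmx C + Zj1 *m ctmx hj1 in
  [/\ ctmx A *m Zj1 = ctmx C *m hj1 + Zj1 *m Hj1,
      0 = Hj1 + ctmx Hj1 - (ctmx Zj1 *m B *m ctmx B *m Zj1 + ctmx hj1 *m hj1),
      Rj1 = Rj + hZ *m ctmx hU1
    & riccati_res A B C (Zj1 *m ctmx Zj1) = Rj1 *m ctmx Rj1].
Proof.
move=> syl_j lyap_j U2_def syl_t Y12_eq _ Y22_eq _ chol.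
move=> Rj G22i hU1 hU2 hD hZ Zj1 hj1 Hj1 Rj1.
have G_unit := cholesky_factor_unit chol.
have [_ _ W_def] := chol.
have syl1 : sylvester_eq A C Zj1 hj1 Hj1.
  apply: (row_mx_sylvester syl_j).
  exact: normalize_sylvester G_unit (new_block_sylvester (Y12 := Y12) syl_j syl_t).
have lyap1 : lyapunov_eq B Zj1 hj1 Hj1.
  apply: (block_mx_lyapunov lyap_j).
    exact: normalize_coupling (new_block_coupling lyap_j U2_def Y12_eq).
  apply: (normalize_lyapunov G_unit (esym W_def)).
  exact: new_block_lyapunov lyap_j U2_def Y12_eq Y22_eq.
split => //; last exact: riccati_res_factor syl1 lyap1.
by rewrite /Rj1 /Zj1 /hj1 /Rj ctmx_row mul_row_col addrA.
Qed.
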